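(* In the setting described in the context, let $n\ge0$ and let $\tilde\mu'_{m,n}=\max\{x\in[\min P,d]: f^{m+2n}(x)=d\}$ (this set is nonempty). Then every periodic point of $f$ in $[\tilde\mu'_{m,n},d]$ whose least period is odd has least period $\ge m+2n+2$.
   Context: Let $I$ be a compact interval and $f:I\to I$ continuous; $f^1=f$, $f^n=f\circ f^{n-1}$. A point $x_0$ is a periodic point of least period $k$ (a period-$k$ point) if $f^k(x_0)=x_0$ and $f^i(x_0)\ne x_0$ for $0<i<k$. Let $m\ge3$ be odd and let $P$ be a periodic orbit of $f$ of least period $m$. Put $e=f^{m-1}(\min P)$. Let $v\in[\min P,e)$ be a point with $f(v)=e$, and let $z\in(v,e)$ be a fixed point of $f$ (such points exist). Define $z_0=\min\{x\in[v,z]: f^2(x)=x\}$ and $d=\max\{x\in[\min P,v]: f^2(x)=z_0\}$ (both sets are nonempty). *)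

From Stdlib Require Import Reals Lra Lia Arith.
Open Scope R_scope.

Fixpoint fpow (f : R -> R) (n : nat) (x : R) : R :=
  match n with
  | O => x
  | S k => f (fpow f k x)
  end.

Definition continuous_on_interval (f : R -> R) (a b : R) : Prop :=
  forall x, a <= x <= b ->
    forall eps, eps > 0 -> exists delta, delta > 0 /\
      forall y, a <= y <= b -> Rabs (y - x) < delta -> Rabs (f y - f x) < eps.

Definition maps_into (f : R -> R) (a b : R) : Prop :=
  forall x, a <= x <= b -> a <= f x <= b.

Definition least_period (f : R -> R) (k : nat) (x0 : R) : Prop :=
  (0 < k)%nat /\ fpow f k x0 = x0 /\
  forall i, (0 < i < k)%nat -> fpow f i x0 <> x0.

From Stdlib Require Import Reals Lra Lia Arith.
Open Scope R_scope.

(* Suppose [y] in [[mu, d]] has odd least period [k <= m + 2n], and pick an odd [j] with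
   [3 <= j <= m + 2n] and [f^j y = y].  Every even iterate of [d] is [z0] and every odd one is
   [f z0 >= z0 > d] (a fixed point of [f] below [z0] would contradict the minimality of [z0]),
   while [f^2] maps [[v, z0]] over [[p, z0]], so [f^(m+2n-j)] sends some [w] in [[y, f z0]] to [d].
   The intermediate value theorem for [f^j] on [[y, d]] yields [u >= y] with [f^(m+2n) u = d];
   maximality of [mu] forces [u = y], so [d] lies on the periodic orbit of [y], which is
   impossible since [f^2] maps [d] to the fixed point [z0 <> d]. *)

Section Iterates.

Variable f : R -> R.

Lemma fpow_add (i j : nat) (x : R) : fpow f (i + j) x = fpow f i (fpow f j x).
Proof. induction i as [|i IH]; simpl; [reflexivity | now rewrite IH]. Qed.

Lemma fpow_comm (i j : nat) (x : R) : fpow f i (fpow f j x) = fpow f j (fpow f i x).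
Proof. now rewrite <- !fpow_add, Nat.add_comm. Qed.

Lemma fpow_fpow (i j : nat) (x : R) : fpow (fpow f i) j x = fpow f (i * j) x.
Proof.
  induction j as [|j IH]; simpl; [now rewrite Nat.mul_0_r |].
  now rewrite IH, <- fpow_add, Nat.mul_succ_r, Nat.add_comm.
Qed.

Lemma fpow_fixed_mul (k i : nat) (x : R) : fpow f k x = x -> fpow f (k * i) x = x.
Proof.
  intros Hx. rewrite <- fpow_fpow.
  induction i as [|i IH]; simpl; [reflexivity | now rewrite IH].
Qed.

Lemma fpow_periodic_orbit (k N : nat) (y : R) :
  fpow f k y = y -> fpow f k (fpow f N y) = fpow f N y.
Proof. intros Hy. now rewrite fpow_comm, Hy. Qed.

Lemma fpow_fixed_odd_ge3 (k : nat) (y : R) :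
  fpow f k y = y -> Nat.Odd k ->
  exists r, (2 * S r + 1 <= Nat.max k 3)%nat /\ fpow f (2 * S r + 1) y = y.
Proof.
  intros Hy [[|r] ->].
  - exists 0%nat. split; [lia |]. exact (fpow_fixed_mul 1 3 y Hy).
  - exists r. split; [lia | exact Hy].
Qed.

Lemma fpow_even_of_fpow2 (d w : R) (i : nat) :
  fpow f 2 d = w -> fpow f 2 w = w -> fpow f (2 * S i) d = w.
Proof.
  intros Hd Hw. replace (2 * S i)%nat with (2 * i + 2)%nat by lia.
  rewrite fpow_add, Hd. exact (fpow_fixed_mul 2 i w Hw).
Qed.

Lemma fpow_odd_of_fpow2 (d w : R) (i : nat) :
  fpow f 2 d = w -> fpow f 2 w = w -> fpow f (2 * S i + 1) d = f w.
Proof.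
  intros Hd Hw. rewrite Nat.add_1_r.
  change (f (fpow f (2 * S i) d) = f w). now rewrite (fpow_even_of_fpow2 d w i).
Qed.

Lemma fpow_not_periodic_of_fpow2 (d w : R) (k : nat) :
  fpow f 2 d = w -> fpow f 2 w = w -> w <> d -> (0 < k)%nat -> fpow f k d <> d.
Proof.
  intros Hd Hw Hwd Hk Hkd. apply Hwd.
  rewrite <- (fpow_fixed_mul k 2 d Hkd).
  replace (k * 2)%nat with (2 * S (k - 1))%nat by lia.
  now rewrite (fpow_even_of_fpow2 d w).
Qed.

End Iterates.

Definition clamp (a b y : R) : R := Rmax a (Rmin b y).

Lemma clamp_in (a b y : R) : a <= b -> a <= clamp a b y <= b.
Proof. intros H. unfold clamp, Rmax, Rmin. repeat destruct Rle_dec; lra. Qed.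

Lemma clamp_id (a b y : R) : a <= y <= b -> clamp a b y = y.
Proof. intros H. unfold clamp, Rmax, Rmin. repeat destruct Rle_dec; lra. Qed.

Lemma clamp_lipschitz (a b y y0 : R) :
  a <= b -> Rabs (clamp a b y - clamp a b y0) <= Rabs (y - y0).
Proof.
  intros H. unfold clamp, Rmax, Rmin.
  repeat destruct Rle_dec; unfold Rabs; repeat destruct Rcase_abs; lra.
Qed.

Lemma continuity_clamp_comp (g : R -> R) (a b : R) :
  a <= b -> continuous_on_interval g a b -> continuity (fun y => g (clamp a b y)).
Proof.
  intros Hab Hg y0 eps Heps.
  destruct (Hg (clamp a b y0) (clamp_in a b y0 Hab) eps Heps) as [delta [Hdelta H]].
  exists delta. split; [exact Hdelta |].
  intros x [_ Hx]. simpl in *. unfold Rdist in *.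
  apply H; [now apply clamp_in |].
  eapply Rle_lt_trans; [apply clamp_lipschitz; exact Hab | exact Hx].
Qed.

Lemma ivt_on_interval (g : R -> R) (a b x y t : R) :
  continuous_on_interval g a b -> a <= x -> x <= y -> y <= b ->
  g x <= t <= g y -> exists c, x <= c <= y /\ g c = t.
Proof.
  intros Hg Hax Hxy Hyb Ht.
  set (G := fun u => g (clamp a b u) - t).
  assert (HG : continuity G).
  { apply continuity_minus; [apply continuity_clamp_comp; [lra | exact Hg] |].
    apply continuity_const. now intros ? ?. }
  assert (HGx : G x = g x - t) by (unfold G; now rewrite clamp_id by lra).
  assert (HGy : G y = g y - t) by (unfold G; now rewrite clamp_id by lra).
  destruct (IVT_cor G x y HG Hxy) as [c [Hc HGc]]; [rewrite HGx, HGy; nra |].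
  exists c. split; [exact Hc |].
  unfold G in HGc. rewrite clamp_id in HGc by lra. lra.
Qed.

Lemma continuous_on_interval_id (a b : R) : continuous_on_interval (fun x => x) a b.
Proof. intros x _ eps Heps. exists eps. auto. Qed.

Lemma continuous_on_interval_minus (g h : R -> R) (a b : R) :
  continuous_on_interval g a b -> continuous_on_interval h a b ->
  continuous_on_interval (fun x => g x - h x) a b.
Proof.
  intros Hg Hh x Hx eps Heps.
  destruct (Hg x Hx (eps / 2)) as [dg [Hdg Hg']]; [lra |].
  destruct (Hh x Hx (eps / 2)) as [dh [Hdh Hh']]; [lra |].
  exists (Rmin dg dh). split; [now apply Rmin_pos |].
  intros y Hy Hyx.
  specialize (Hg' y Hy (Rlt_le_trans _ _ _ Hyx (Rmin_l dg dh))).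
  specialize (Hh' y Hy (Rlt_le_trans _ _ _ Hyx (Rmin_r dg dh))).
  revert Hg' Hh'. unfold Rabs. repeat destruct Rcase_abs; lra.
Qed.

Lemma continuous_on_interval_comp (g h : R -> R) (a b : R) :
  maps_into g a b -> continuous_on_interval g a b -> continuous_on_interval h a b ->
  continuous_on_interval (fun x => h (g x)) a b.
Proof.
  intros Hmaps Hg Hh x Hx eps Heps.
  destruct (Hh (g x) (Hmaps x Hx) eps Heps) as [dh [Hdh Hh']].
  destruct (Hg x Hx dh Hdh) as [dg [Hdg Hg']].
  exists dg. split; [exact Hdg |].
  intros y Hy Hyx. apply Hh'; [now apply Hmaps | now apply Hg'].
Qed.

Section IntervalMaps.

Variables (a b : R) (f : R -> R).
Hypotheses (Hmaps : maps_into f a b) (Hcont : continuous_on_interval f a b).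

Lemma fpow_maps_into (k : nat) : maps_into (fpow f k) a b.
Proof. intros x Hx. induction k as [|k IH]; simpl; auto. Qed.

Lemma continuous_on_interval_fpow (k : nat) : continuous_on_interval (fpow f k) a b.
Proof.
  induction k as [|k IH]; [exact (continuous_on_interval_id a b) |].
  exact (continuous_on_interval_comp _ _ a b (fpow_maps_into k) IH Hcont).
Qed.

Lemma ivt_fpow (j : nat) (x y t : R) :
  a <= x -> x <= y -> y <= b -> fpow f j x <= t <= fpow f j y ->
  exists c, x <= c <= y /\ fpow f j c = t.
Proof. apply ivt_on_interval. apply continuous_on_interval_fpow. Qed.

Lemma fixed_point_between (x y : R) :
  a <= x -> x <= y -> y <= b -> x <= f x -> f y <= y ->
  exists c, x <= c <= y /\ f c = c.
Proof.
  intros Hax Hxy Hyb Hx Hy.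
  destruct (ivt_on_interval (fun u => u - f u) a b x y 0) as [c [Hc Hfc]]; try lra.
  - exact (continuous_on_interval_minus _ _ a b (continuous_on_interval_id a b) Hcont).
  - exists c. split; [exact Hc | lra].
Qed.

Lemma covering_fpow (x y : R) (s : nat) (t : R) :
  a <= x -> x <= y -> y <= b -> f x <= x -> y <= f y ->
  f x <= t <= f y -> exists q, x <= q <= y /\ fpow f (S s) q = t.
Proof.
  intros Hax Hxy Hyb Hx Hy. revert t.
  induction s as [|s IH]; intros t Ht; [exact (ivt_fpow 1 x y t Hax Hxy Hyb Ht) |].
  destruct (IH t Ht) as [q' [Hq' Hq't]].
  destruct (ivt_fpow 1 x y q' Hax Hxy Hyb) as [q [Hq Hqq']]; [simpl; lra |].
  exists q. split; [exact Hq |].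
  replace (S (S s)) with (S s + 1)%nat by lia.
  now rewrite fpow_add, Hqq'.
Qed.

Lemma least_fpow2_fixed_above (v z z0 : R) :
  a <= v -> z <= b -> v <= f v -> v <= z0 <= z ->
  (forall x, v <= x <= z -> fpow f 2 x = x -> z0 <= x) ->
  z0 <= f z0.
Proof.
  intros Hav Hzb Hv Hz0 Hmin.
  destruct (Rle_or_lt z0 (f z0)) as [H | Hlt]; [exact H | exfalso].
  destruct (fixed_point_between v z0) as [c [Hc Hfc]]; try lra.
  assert (z0 <= c) by (apply Hmin; [lra | simpl; now rewrite !Hfc]).
  replace c with z0 in Hfc by lra. lra.
Qed.

End IntervalMaps.

Theorem lemma7 (a b : R) (f : R -> R) (m n : nat) (p e v z z0 d mu : R) :
  a <= b ->
  maps_into f a b ->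
  continuous_on_interval f a b ->
  (3 <= m)%nat -> Nat.Odd m ->
  a <= p <= b ->
  least_period f m p ->
  (forall i : nat, p <= fpow f i p) ->
  e = fpow f (m - 1) p ->
  p <= v < e -> f v = e ->
  v < z < e -> f z = z ->
  (* z0 = min { x in [v,z] | f^2 x = x } *)
  (v <= z0 <= z /\ fpow f 2 z0 = z0 /\
   forall x, v <= x <= z -> fpow f 2 x = x -> z0 <= x) ->
  (* d = max { x in [p,v] | f^2 x = z0 } *)
  (p <= d <= v /\ fpow f 2 d = z0 /\
   forall x, p <= x <= v -> fpow f 2 x = z0 -> x <= d) ->
  (* mu = max { x in [p,d] | f^(m+2n) x = d } *)
  (p <= mu <= d /\ fpow f (m + 2 * n) mu = d /\
   forall x, p <= x <= d -> fpow f (m + 2 * n) x = d -> x <= mu) ->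
  forall (y : R) (k : nat),
    mu <= y <= d -> least_period f k y -> Nat.Odd k ->
    (m + 2 * n + 2 <= k)%nat.
Proof.
  intros _ Hmaps Hcont Hm3 Hmodd Hp [_ [Hpm Hpmin]] _ He Hv Hfv Hz _
    [Hz0 [Hz0fix Hz0min]] [Hd [Hdz0 _]] [Hmu [_ Hmumax]] y k Hy [Hk0 [Hky _]] Hkodd.
  assert (Hf2v : fpow f 2 v = p).
  { simpl. rewrite Hfv, He. change (fpow f (S (m - 1)) p = p).
    now replace (S (m - 1)) with m by lia. }
  assert (Hvz0 : v < z0).
  { destruct (proj1 Hz0) as [H | <-]; [exact H | exfalso].
    apply (Hpmin 2%nat); [lia |]. now rewrite <- Hf2v at 1 2; rewrite Hz0fix. }
  assert (He_in : e <= b) by (rewrite He; apply (fpow_maps_into a b f Hmaps); lra).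
  assert (Hfz0 : z0 <= f z0).
  { apply (least_fpow2_fixed_above a b f Hcont v z); [lra ..| exact Hz0min]. }
  destruct (le_lt_dec (m + 2 * n + 2) k) as [Hle | Hlt]; [exact Hle | exfalso].
  destruct (fpow_fixed_odd_ge3 f k y Hky Hkodd) as [r [Hj Hjy]].
  destruct Hmodd as [m' Hm'].
  set (j := (2 * S r + 1)%nat) in *.
  assert (Hs : exists s, (m + 2 * n = j + 2 * s)%nat) by (exists (m' + n - r - 1)%nat; lia).
  destruct Hs as [s Hs].
  assert (Hw : exists w, y <= w <= f z0 /\ fpow f (2 * s) w = d).
  { destruct s as [|s]; [exists d; split; [lra | reflexivity] |].
    destruct (covering_fpow a b (fpow f 2) (fpow_maps_into a b f Hmaps 2)
                (continuous_on_interval_fpow a b f Hmaps Hcont 2) v z0 s d)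
      as [q [Hq Hqd]]; try lra.
    exists q. split; [lra |]. now rewrite <- fpow_fpow. }
  destruct Hw as [w [Hw Hwd]].
  destruct (ivt_fpow a b f Hmaps Hcont j y d w) as [u [Hu Huw]]; try lra.
  { rewrite Hjy. unfold j. rewrite (fpow_odd_of_fpow2 f d z0 r Hdz0 Hz0fix). lra. }
  assert (Hud : fpow f (m + 2 * n) u = d) by now rewrite Hs, Nat.add_comm, fpow_add, Huw.
  assert (u = y) by (pose proof (Hmumax u ltac:(lra) Hud); lra). subst u.
  apply (fpow_not_periodic_of_fpow2 f d z0 k Hdz0 Hz0fix); [lra | exact Hk0 |].
  rewrite <- Hud. now apply fpow_periodic_orbit.
Qed.
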